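(* Let $K$ be a finite field of characteristic $p$ and let $T$ be a finite $p$-group. Then the one-dimensional ideal $K\sum_{t\in T}t$ of $KT$ is checkable if and only if $T$ is cyclic.
   Context: A right ideal $I\le KT$ is called checkable if there is $v\in KT$ with $I=\{a\in KT: va=0\}$. *)

From HB Require Import structures.
From mathcomp Require Import all_boot all_order all_algebra all_fingroup all_solvable all_field.
Set Implicit Arguments. Unset Strict Implicit. Unset Printing Implicit Defensive.
Import GRing.Theory.
Local Open Scope ring_scope.

(* The group algebra KT of a finite group T (the whole finGroupType gT) over
   a ring K: elements are functions T -> K (a = \sum_t a(t) t), with the
   K-vector space structure of {ffun gT -> K}. *)
Definition galg (gT : finGroupType) (K : nzRingType) := {ffun gT -> K}.

Definition gamul (gT : finGroupType) (K : nzRingType) (a b : galg gT K)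
  : galg gT K :=
  [ffun g => \sum_(h : gT) a h * b (h^-1 * g)%g].

Definition gasum (gT : finGroupType) (K : nzRingType) : galg gT K :=
  [ffun _ => 1].

Definition checkable (gT : finGroupType) (K : nzRingType)
  (I : galg gT K -> Prop) : Prop :=
  exists v : galg gT K, forall a : galg gT K, I a <-> gamul v a = 0.

Definition sum_ideal (gT : finGroupType) (K : nzRingType) (a : {ffun gT -> K}) : Prop :=
  exists c : K, a = [ffun t => c * gasum gT K t].

From HB Require Import structures.
From mathcomp Require Import all_boot all_order all_algebra all_fingroup all_solvable all_field.
From mathcomp Require Import mxabelem.
From mathcomp Require Import ring.
Set Implicit Arguments. Unset Strict Implicit. Unset Printing Implicit Defensive.
Import GRing.Theory.
Local Open Scope ring_scope.

(* Write a(x) for the coefficient of x in a ∈ KT, so that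
   (v a)(x) = Σ_h v(h) a(h⁻¹x), and call f : T -> K additive when
   f(xy) = f(x) + f(y).
   - If T = <g> is cyclic, take v = 1 - g: then (v a)(x) = a(x) - a(g⁻¹x),
     so v a = 0 iff a is constant, i.e. iff a ∈ K Σ_t t.
   - For an additive f, viewed as an element of KT, one computes
     v f = ε(v) f - <v, f> where ε(v) = Σ_h v(h) and <v, f> = Σ_h v(h) f(h).
     If the annihilator of v is K Σ_t t, then ε(v) = 0, so every additive f
     with <v, f> = 0 is constant, hence zero.  Given two additive maps φ, ψ
     with φ(t1) = ψ(t2) = 1 and φ(t2) = 0, the additive combination
     <v,ψ> φ - <v,φ> ψ pairs to zero with v, so it vanishes; at t2 this gives
     <v,φ> = 0, so φ vanishes too, contradicting φ(t1) = 1.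
   - If T is a non-cyclic p-group, its Frattini quotient is elementary
     abelian of rank ≥ 2, and two coordinate functions (F_p ⊆ K) give such
     a pair φ, ψ. *)

Lemma gamulE (gT : finGroupType) (K : nzRingType) (v a : galg gT K) x :
  gamul v a x = \sum_(h : gT) v h * a (h^-1 * x)%g.
Proof. by rewrite /gamul ffunE. Qed.

Definition additive_map (gT : finGroupType) (K : zmodType) (f : gT -> K) :=
  forall x y, f (x * y)%g = f x + f y.

Lemma additive_map1 (gT : finGroupType) (K : zmodType) (f : gT -> K) :
  additive_map f -> f 1%g = 0.
Proof.
by move=> fA; apply: (addrI (f 1%g)); rewrite addr0 -fA mulg1.
Qed.

Lemma additive_mapV (gT : finGroupType) (K : zmodType) (f : gT -> K) x :
  additive_map f -> f x^-1%g = - f x.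
Proof.
by move=> fA; apply/eqP; rewrite -addr_eq0 -fA mulVg (additive_map1 fA).
Qed.

Section CyclicCase.

Variables (gT : finGroupType) (K : nzRingType) (g : gT).
Hypothesis gen_g : [set: gT]%g = <[g]>%g.

Definition one_sub_gen : galg gT K := [ffun h => (h == 1%g)%:R - (h == g)%:R].

Lemma one_sub_genE (a : galg gT K) x :
  gamul one_sub_gen a x = a x - a (g^-1 * x)%g.
Proof.
have delta (y : gT) : \sum_h (h == y)%:R * a (h^-1 * x)%g = a (y^-1 * x)%g.
  rewrite (bigD1 y) //= eqxx mul1r big1 ?addr0 // => h /negPf->.
  by rewrite mul0r.
rewrite gamulE; under eq_bigr do rewrite ffunE mulrBl.
by rewrite sumrB !delta invg1 mul1g.
Qed.

Lemma ann_one_sub_gen (a : galg gT K) :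
  sum_ideal a <-> gamul one_sub_gen a = 0.
Proof.
split=> [[c ->] | ann_a].
  by apply/ffunP=> x; rewrite one_sub_genE !ffunE subrr.
have shift x : a x = a (g^-1 * x)%g.
  by apply/eqP; rewrite -subr_eq0 -one_sub_genE ann_a ffunE.
exists (a 1%g); apply/ffunP=> x; rewrite !ffunE mulr1.
have /cycleP[k ->] : x \in <[g]>%g by rewrite -gen_g inE.
by elim: k => [|k IHk]; rewrite ?expg0 // expgS [LHS]shift mulKg.
Qed.

End CyclicCase.

Lemma cyclic_checkable (gT : finGroupType) (K : nzRingType) :
  cyclic [set: gT]%g -> checkable (sum_ideal (gT := gT) (K := K)).
Proof.
by case/cyclicP=> g gen_g; exists (one_sub_gen K g) => a; apply: ann_one_sub_gen.
Qed.

Section Pairing.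

Variables (gT : finGroupType) (K : comNzRingType) (v : galg gT K).

Definition augmentation : K := \sum_h v h.
Definition pairing (f : gT -> K) : K := \sum_h v h * f h.

Lemma gamul_additive (f : gT -> K) x : additive_map f ->
  gamul v (finfun f) x = augmentation * f x - pairing f.
Proof.
move=> fA; rewrite gamulE /augmentation mulr_suml -sumrB.
apply: eq_bigr => h _.
by rewrite ffunE fA (additive_mapV _ fA) mulrDr mulrN addrC.
Qed.

Lemma pairing_comb (f1 f2 : gT -> K) (c1 c2 : K) :
  pairing (fun x => c1 * f1 x - c2 * f2 x) = c1 * pairing f1 - c2 * pairing f2.
Proof.
rewrite /pairing !mulr_sumr -sumrB; apply: eq_bigr => h _.
by rewrite mulrBr !mulrA [v h * c1]mulrC [v h * c2]mulrC.
Qed.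

Hypothesis ann_v : forall a, sum_ideal a <-> gamul v a = 0.

Lemma augmentation_ann : augmentation = 0.
Proof.
have /ann_v/(congr1 (fun a : galg gT K => a 1%g)) :
    sum_ideal (gasum gT K).
  by exists 1; apply/ffunP=> t; rewrite !ffunE mul1r.
rewrite gamulE ffunE => <-.
by apply: eq_bigr => h _; rewrite ffunE mulr1.
Qed.

Lemma pairing0_additive (f : gT -> K) : additive_map f ->
  pairing f = 0 -> forall x, f x = 0.
Proof.
move=> fA pf0 x.
have /ann_v[c fE] : gamul v (finfun f) = 0.
  apply/ffunP=> y.
  by rewrite gamul_additive // augmentation_ann pf0 mul0r subrr ffunE.
have fc y : f y = c by have := congr1 (fun a : galg gT K => a y) fE; rewrite !ffunE mulr1.
by rewrite fc -(fc 1%g) (additive_map1 fA).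
Qed.

Lemma no_dual_additive_pair (phi psi : gT -> K) t1 t2 :
  additive_map phi -> additive_map psi ->
  phi t1 = 1 -> phi t2 = 0 -> psi t2 = 1 -> False.
Proof.
move=> phiA psiA phi1 phi2 psi2.
pose g x := pairing psi * phi x - pairing phi * psi x.
have gA : additive_map g by move=> x y; rewrite /g phiA psiA; ring.
have pg0 : pairing g = 0 by rewrite pairing_comb mulrC subrr.
have /eqP : g t2 = 0 := pairing0_additive gA pg0 t2.
rewrite /g phi2 psi2 mulr0 mulr1 sub0r oppr_eq0 => /eqP pphi0.
by have := pairing0_additive phiA pphi0 t1; rewrite phi1; apply/eqP/oner_neq0.
Qed.

End Pairing.

Lemma abelem_noncyclic_dim (p : nat) (gT : finGroupType) (A : {group gT}) :
  (p.-abelem A)%g -> ~~ cyclic A -> exists ntA : (A :!=: 1)%g, (1 < 'dim A)%N.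
Proof.
move=> abelA ncycA.
have ntA : (A :!=: 1)%g by apply: contra ncycA => /eqP->; apply: cyclic1.
by exists ntA; rewrite (dim_abelemE abelA ntA) ltnNge -(abelem_cyclic abelA).
Qed.

Section FrattiniCoordinates.

Variables (K : nzRingType) (p : nat) (gT : finGroupType).
Hypotheses (charK : p \in [pchar K]) (pT : (p.-group [set: gT])%g).

Lemma Fp_val_add (a b : 'F_p) :
  ((val (a + b)%R)%:R : K) = (val a)%:R + (val b)%:R.
Proof.
have p_pr := pcharf_prime charK.
have -> : (a + b)%R = ((val a + val b)%:R : 'F_p) by rewrite natrD !natr_Zp.
by rewrite [val _]/= (val_Fp_nat p_pr) GRing.natr_mod_pchar // natrD.
Qed.

Local Notation G := [set: gT]%G.
Local Notation E := (G / 'Phi(G))%G.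

Lemma noncyclic_dual_additive_pair : ~~ cyclic [set: gT]%g ->
  exists phi psi : gT -> K, exists t1 t2,
  [/\ additive_map phi, additive_map psi, phi t1 = 1, phi t2 = 0 & psi t2 = 1].
Proof.
move=> ncyc; have abelE : (p.-abelem E)%g := Phi_quotient_abelem pT.
have ncycE : ~~ cyclic E by apply: contra ncyc; apply: Phi_quotient_cyclic.
have [ntE dimE] := abelem_noncyclic_dim abelE ncycE.
pose ErV := abelem_rV abelE ntE.
have nPhi (x : gT) : x \in 'N('Phi(G))%g.
  by rewrite (subsetP (normal_norm (Phi_normal G))) ?inE.
pose coord i (x : gT) : K := (val (ErV (coset 'Phi(G) x) 0 i))%:R.
have coordA i : additive_map (coord i).
  move=> x y; rewrite /coord morphM ?nPhi // /ErV abelem_rV_M ?mem_quotient ?inE //.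
  by rewrite mxE Fp_val_add.
have coord_onto j : exists t, forall i, coord i t = (i == j)%:R.
  have [t _ tE] := cosetP (rVabelem abelE ntE (delta_mx 0 j)).
  exists t => i; rewrite /coord -tE /ErV rVabelemK mxE eqxx /=.
  by case: (i == j); rewrite ?Fp_cast ?modn_small ?prime_gt1 ?(pcharf_prime charK).
have [t1 coord_t1] := coord_onto (Ordinal (ltnW dimE)).
have [t2 coord_t2] := coord_onto (Ordinal dimE).
exists (coord (Ordinal (ltnW dimE))), (coord (Ordinal dimE)), t1, t2.
by split; rewrite ?coord_t1 ?coord_t2 ?eqxx.
Qed.

End FrattiniCoordinates.

Theorem mainTheorem7 (K : finFieldType) (p : nat) (gT : finGroupType)
  (charK : p \in [pchar K]%R) (pT : (p.-group [set: gT])%g) :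
  checkable (sum_ideal (K := K) (gT := gT)) <-> cyclic [set: gT]%g.
Proof.
split; last exact: cyclic_checkable.
move=> [v ann_v]; have [// | ncyc] := boolP (cyclic [set: gT]%g).
have [phi [psi [t1 [t2 [phiA psiA phi1 phi2 psi2]]]]] :=
  noncyclic_dual_additive_pair charK pT ncyc.
by case: (no_dual_additive_pair ann_v phiA psiA phi1 phi2 psi2).
Qed.
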